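(* Let $\Omega$ be a compact Riemannian manifold without boundary, let $K:\Omega\times\Omega\to\mathbb{R}$ be continuous, and let $\beta>0$. Define for $p\in\mathcal{P}(\Omega)$ $$F_{p,\beta}(p)=\beta^{-1}\log Z_q(p)+\beta^{-1}S(p),\qquad Z_q(p)=\int_\Omega\exp\Big(\beta\int_\Omega K(x,y)p(x)\,dx\Big)dy,\qquad S(p)=\int_\Omega p\log p\,dx.$$ Then for any two distinct probability densities $p_1\neq p_2$ on $\Omega$ with $S(p_1),S(p_2)<\infty$ and any $\lambda\in(0,1)$, $$F_{p,\beta}(\lambda p_1+(1-\lambda)p_2)<\lambda F_{p,\beta}(p_1)+(1-\lambda)F_{p,\beta}(p_2).$$
   Context: $\mathcal{P}(\Omega)$ is the set of probability distributions on $\Omega$, identified with densities with respect to the Riemannian volume measure; $S(p)=+\infty$ if $p$ has no density. *)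

From HB Require Import structures.
From mathcomp Require Import all_boot all_order all_algebra.
From mathcomp Require Import all_classical all_reals all_analysis.
Set Implicit Arguments. Unset Strict Implicit. Unset Printing Implicit Defensive.
Import Order.TTheory GRing.Theory Num.Theory.
Import numFieldNormedType.Exports.
Local Open Scope classical_set_scope.
Local Open Scope ring_scope.

Definition borel_type (T : ptopologicalType) := g_sigma_algebraType (@open T).

Section Free_energy.
Context {R : realType} {T : ptopologicalType}.
Variable mu : {measure set (borel_type T) -> \bar R}.

Definition is_density (p : borel_type T -> R) : Prop :=
  measurable_fun setT p /\ (forall x, 0 <= p x) /\
  (\int[mu]_x (p x)%:E = 1)%E.

(* Entropy S(p) = \int p log p (with 0 log 0 = 0, since ln 0 = 0). *)
Definition entropy (p : borel_type T -> R) : \bar R :=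
  (\int[mu]_x (p x * ln (p x))%:E)%E.

Definition partition_fun (K : T -> T -> R) (beta : R) (p : borel_type T -> R) : R :=
  Rintegral mu setT
    (fun y => expR (beta * Rintegral mu setT (fun x => K x y * p x))).

Definition free_energy (K : T -> T -> R) (beta : R) (p : borel_type T -> R) : \bar R :=
  ((beta^-1 * ln (partition_fun K beta p))%:E + (beta^-1)%:E * entropy p)%E.

End Free_energy.

From HB Require Import structures.
From mathcomp Require Import all_boot all_order all_algebra.
From mathcomp Require Import all_classical all_reals all_analysis.
From mathcomp Require Import ring lra measurable_realfun.
Import Order.TTheory GRing.Theory Num.Theory.
Import numFieldNormedType.Exports.
Local Open Scope classical_set_scope.
Local Open Scope ring_scope.

(* The potential y |-> \int K(x, y) p(x) dx is affine in p,
   and ln \int exp G is convex in G by Hoelder's inequality, so ln Z is convex in p.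
   The entropy S is strictly convex: t ln t is strictly convex on [0, +oo), and two
   densities that are not a.e. equal differ on a set of positive measure, where the
   pointwise convexity gap of t ln t is positive. *)

Section real_inequalities.
Context {R : realType}.

Definition xlnx (t : R) : R := t * ln t.

Lemma ln_lt_subr1 (x : R) : 0 < x -> x != 1 -> ln x < x - 1.
Proof.
move=> x0 x1; have : 1 + ln x < expR (ln x) by apply: expR_gt1Dx; rewrite ln_eq0.
by rewrite lnK //; lra.
Qed.

Lemma xlnx_tangent_lt {m a : R} : 0 < m -> 0 <= a -> a != m ->
  xlnx m + (ln m + 1) * (a - m) < xlnx a.
Proof.
move=> m0 a0 am; rewrite /xlnx.
have [->|a_neq0] := eqVneq a 0; first by rewrite mul0r; lra.
have a_gt0 : 0 < a by rewrite lt0r a_neq0.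
have : ln (m / a) < m / a - 1.
  apply: ln_lt_subr1; first by rewrite divr_gt0.
  by apply: contra am => /eqP h; rewrite -[m](divfK a_neq0) h mul1r.
rewrite ln_div ?posrE // => lt_ln.
have a_ma : a * (m / a) = m by rewrite mulrC divfK.
nra.
Qed.

Lemma xlnx_tangent_le {m a : R} : 0 < m -> 0 <= a ->
  xlnx m + (ln m + 1) * (a - m) <= xlnx a.
Proof.
move=> m0 a0; have [->|am] := eqVneq a m; first by rewrite subrr mulr0 addr0.
exact/ltW/xlnx_tangent_lt.
Qed.

Lemma xlnx_ge_N1 {t : R} : 0 <= t -> -1 <= xlnx t.
Proof. by move=> t0; have := @xlnx_tangent_le 1 t ltr01 t0; rewrite /xlnx ln1; lra. Qed.

Lemma xlnx_convex_lt {l a b : R} : 0 < l < 1 -> 0 <= a -> 0 <= b -> a != b ->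
  xlnx (l * a + (1 - l) * b) < l * xlnx a + (1 - l) * xlnx b.
Proof.
move=> /andP[l0 l1] a0 b0 ab; set m := l * a + (1 - l) * b.
have m0 : 0 < m.
  have [a_eq0|a_neq0] := eqVneq a 0.
    have : 0 < b by rewrite lt0r b0 andbT -a_eq0 eq_sym.
    by rewrite /m a_eq0; nra.
  have : 0 < a by rewrite lt0r a_neq0.
  by rewrite /m; nra.
have l0' : 0 < 1 - l by rewrite subr_gt0.
have am : a != m.
  rewrite -subr_eq0 (_ : a - m = (1 - l) * (a - b)); last by rewrite /m; ring.
  by rewrite mulf_neq0 ?(lt0r_neq0 l0') ?subr_eq0.
have bm : b != m.
  rewrite -subr_eq0 (_ : b - m = l * (b - a)); last by rewrite /m; ring.
  by rewrite mulf_neq0 ?(lt0r_neq0 l0) // subr_eq0 eq_sym.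
have := xlnx_tangent_lt m0 a0 am; have := xlnx_tangent_lt m0 b0 bm.
rewrite /m; nra.
Qed.

Lemma xlnx_convex_le {l a b : R} : 0 < l < 1 -> 0 <= a -> 0 <= b ->
  xlnx (l * a + (1 - l) * b) <= l * xlnx a + (1 - l) * xlnx b.
Proof.
move=> l01 a0 b0; have [->|ab] := eqVneq a b; last exact/ltW/xlnx_convex_lt.
by rewrite -!mulrDl subrKC !mul1r.
Qed.

Lemma scaled_convex_comb_lt (k l z z1 z2 s s1 s2 : R) : 0 < k ->
  z <= l * z1 + (1 - l) * z2 -> s < l * s1 + (1 - l) * s2 ->
  k * z + k * s < l * (k * z1 + k * s1) + (1 - l) * (k * z2 + k * s2).
Proof. by move=> k0 le_z lt_s; nra. Qed.

Lemma measurable_xlnx : measurable_fun [set: R] xlnx.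
Proof. by apply: measurable_funM => //; exact: measurable_ln. Qed.

(* Integrated against mu with s = G1 y, t = G2 y, A = \int e^G1 and B = \int e^G2,
   this is Hoelder's inequality with exponents 1/l and 1/(1 - l). *)
Lemma holder_expR_pointwise (l s t A B : R) : 0 <= l <= 1 -> 0 < A -> 0 < B ->
  expR (l * s + (1 - l) * t) <=
  expR (l * ln A + (1 - l) * ln B) * (l * (expR s / A) + (1 - l) * (expR t / B)).
Proof.
move=> /andP[l0 l1] A0 B0.
have := @convex_expR R (Itv01 l0 l1) (s - ln A) (t - ln B).
rewrite !convRE /= => le_conv.
have -> : l * s + (1 - l) * t =
  (l * ln A + (1 - l) * ln B) + (l * (s - ln A) + (1 - l) * (t - ln B)) by ring.
rewrite expRD ler_wpM2l ?expR_ge0 //.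
have expR_sub_ln x C : 0 < C -> expR (x - ln C) = expR x / C.
  by move=> C0; rewrite expRD expRN lnK.
by rewrite -!expR_sub_ln.
Qed.

End real_inequalities.

Section compact_equicontinuity.
Context {R : realType} {X Y : topologicalType}.

Lemma compact_equicontinuous {f : X -> Y -> R} : compact [set: X] ->
  continuous (fun xy : X * Y => f xy.1 xy.2) ->
  forall (y0 : Y) (e : R), 0 < e -> \forall y \near y0, forall x, `|f x y - f x y0| < e.
Proof.
move=> cX cf y0 e e0; have e2 : 0 < e / 2 by rewrite divr_gt0.
suff : \forall y \near y0, [set: X] `<=` (fun x => `|f x y - f x y0| < e).
  by apply: filterS => y fy x; exact: fy.
apply: (compact_near_coveringP _).1 cX _ _ (fun y x => `|f x y - f x y0| < e) _ _ => // x _.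
have /cvgrPdist_lt/(_ _ e2) [[A B] /= [nA nB] AB_sub] := cf (x, y0).
exists (A, B) => // -[a b] /= [Aa Bb].
have near_ab := AB_sub (a, b) (conj Aa Bb).
have near_ay0 := AB_sub (a, y0) (conj Aa (nbhs_singleton nB)).
rewrite (_ : f a b - f a y0 = (f x y0 - f a y0) - (f x y0 - f a b)); last by ring.
by apply: le_lt_trans (ler_normB _ _) _; rewrite [ltRHS]splitr ltrD.
Qed.

End compact_equicontinuity.

Section integrable_EFin.
Context {d : measure_display} {X : measurableType d} {R : realType}
  {mu : {measure set X -> \bar R}}.

Lemma integrableZl_EFin (k : R) {f : X -> R} : mu.-integrable setT (EFin \o f) ->
  mu.-integrable setT (EFin \o (fun x => k * f x)).
Proof.
move=> fi; apply: eq_integrable measurableT _ _ _ (integrableZl measurableT k fi) => x _.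
by rewrite /= EFinM.
Qed.

Lemma integrableD_EFin {f g : X -> R} : mu.-integrable setT (EFin \o f) ->
  mu.-integrable setT (EFin \o g) -> mu.-integrable setT (EFin \o (fun x => f x + g x)).
Proof.
move=> fi gi; apply: eq_integrable measurableT _ _ _ (integrableD measurableT fi gi) => x _.
by rewrite /= EFinD.
Qed.

Lemma integrableB_EFin {f g : X -> R} : mu.-integrable setT (EFin \o f) ->
  mu.-integrable setT (EFin \o g) -> mu.-integrable setT (EFin \o (fun x => f x - g x)).
Proof.
move=> fi gi; apply: eq_integrable measurableT _ _ _ (integrableB measurableT fi gi) => x _.
by rewrite /= EFinB.
Qed.

Lemma integral_EFin_Rintegral {f : X -> R} : mu.-integrable setT (EFin \o f) ->
  (\int[mu]_x (f x)%:E)%E = (\int[mu]_x f x)%:E.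
Proof. by move=> fi; rewrite /Rintegral fineK // integrable_fin_num. Qed.

Lemma Rintegral_gt0 {f : X -> R} : mu.-integrable setT (EFin \o f) ->
  (forall x, 0 <= f x) -> ~ {ae mu, forall x, f x = 0} -> 0 < \int[mu]_x f x.
Proof.
move=> fi f0 not_ae0; rewrite lt_neqAle Rintegral_ge0 // andbT eq_sym.
apply/eqP => If0; apply: not_ae0.
have /(ae_eq_integral_abs mu measurableT (measurable_int mu fi)) :
    (\int[mu]_x `|(EFin \o f) x| = 0)%E.
  under eq_integral do rewrite /= ger0_norm //.
  by rewrite integral_EFin_Rintegral // If0.
by apply: filterS => x /(_ I) [].
Qed.

Lemma finite_integrable_cst (k : R) : (mu setT < +oo)%E ->
  mu.-integrable setT (EFin \o cst k).
Proof.
move=> finT; apply/integrableP; split; first exact/measurable_EFinP.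
by rewrite (eq_integral (cst `|k|%:E)) // integral_cst //= lte_mul_pinfty ?lee_fin.
Qed.

Lemma lower_bounded_integrable (c : R) {f : X -> R} : (mu setT < +oo)%E ->
  measurable_fun setT f -> (forall x, c <= f x) -> (\int[mu]_x (f x)%:E < +oo)%E ->
  mu.-integrable setT (EFin \o f).
Proof.
move=> finT mf cf fi; have mF : measurable_fun setT (EFin \o f) by exact/measurable_EFinP.
apply/integrableP; split => //; rewrite -/(abse \o _) fune_abse.
rewrite ge0_integralD //; [|exact: measurable_funepos|exact: measurable_funeneg].
have neg_lt : (\int[mu]_x (EFin \o f)^\- x < +oo)%E.
  apply: le_lt_trans (_ : \int[mu]_x (cst `|c|%:E) x < +oo)%E; last first.
    by rewrite integral_cst // lte_mul_pinfty.
  apply: ge0_le_integral => //; first exact: measurable_funeneg.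
  move=> x _; rewrite funenegE ge_max /= !lee_fin normr_ge0 andbT.
  by have := cf x; have := ler_norm (- c); rewrite normrN; lra.
have neg_fin : (\int[mu]_x (EFin \o f)^\- x)%E \is a fin_num.
  by rewrite ge0_fin_numE //; apply: integral_ge0.
apply: lte_add_pinfty => //.
by rewrite -(subeK (\int[mu]_x (EFin \o f)^\+ x)%E neg_fin) -integralE lte_add_pinfty.
Qed.

End integrable_EFin.

Section free_energy_convexity.
Context {R : realType} {T : ptopologicalType}.
Variable mu : {measure set (borel_type T) -> \bar R}.

Lemma continuous_borel_measurable {f : T -> R} : continuous f ->
  measurable_fun [set: borel_type T] (f : borel_type T -> R).
Proof.
move=> /continuousP cf.
apply: (measurability _ (measurable_realfun.RGenOpens.measurableE R)).
move=> _ [_ [a [b ->] <-]]; apply: sub_sigma_algebra; rewrite setTI.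
exact/cf/interval_open.
Qed.

Hypothesis compactT : compact [set: T].
Hypothesis finite_muT : (mu setT < +oo)%E.

Lemma continuous_bounded {f : T -> R} : continuous f -> exists M, forall x, `|f x| <= M.
Proof.
move=> cf; have := continuous_compact (continuous_subspaceT cf) compactT.
move=> /compact_bounded[M [_ fM]].
by exists (M + 1) => x; apply: fM; [rewrite ltrDl | exists x].
Qed.

Lemma continuous_integrable {f : T -> R} : continuous f ->
  mu.-integrable setT (EFin \o (f : borel_type T -> R)).
Proof.
move=> cf; have [M fM] := continuous_bounded cf.
have mf := continuous_borel_measurable cf.
apply/integrableP; split; first exact/measurable_EFinP.
apply: le_lt_trans (_ : \int[mu]_x (cst M%:E x) < +oo)%E; last first.
  by rewrite integral_cst // lte_mul_pinfty // lee_fin (le_trans _ (fM point)).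
apply: ge0_le_integral => //= [|x _]; last by rewrite lee_fin.
exact/measurable_EFinP/measurableT_comp.
Qed.

Lemma density_integrable {p : borel_type T -> R} : is_density mu p ->
  mu.-integrable setT (EFin \o p).
Proof.
move=> [mp [p0 ip]]; apply/integrableP; split; first exact/measurable_EFinP.
by under eq_integral do rewrite /= ger0_norm //; rewrite ip ltry.
Qed.

Lemma Rintegral_density {p : borel_type T -> R} : is_density mu p -> \int[mu]_x p x = 1.
Proof. by case=> _ [_ ip]; rewrite /Rintegral ip. Qed.

Lemma density_measureT_gt0 {p : borel_type T -> R} : is_density mu p -> (0 < mu setT)%E.
Proof.
move=> [mp [_ ip]]; rewrite lt0e measure_ge0 andbT; apply/eqP => muT0.
move: ip; rewrite null_set_integral //; last exact/measurable_EFinP.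
by move=> [] /esym/eqP; rewrite oner_eq0.
Qed.

Lemma continuous_mul_density_integrable {h : T -> R} {p : borel_type T -> R} : continuous h ->
  is_density mu p -> mu.-integrable setT (EFin \o (fun x => h x * p x)).
Proof.
move=> ch dp; have [M hM] := continuous_bounded ch; have [mp [p0 _]] := dp.
apply: (le_integrable measurableT _ _ (integrableZl_EFin M (density_integrable dp))).
  by apply/measurable_EFinP/measurable_funM => //; exact: continuous_borel_measurable.
move=> x _; rewrite /= !lee_fin normrM (ger0_norm (p0 x)).
by rewrite (le_trans _ (ler_norm _)) // ler_wpM2r.
Qed.

Lemma Rintegral_mul_density_le {h : T -> R} {p : borel_type T -> R} {e : R} :
  continuous h -> is_density mu p -> (forall x, `|h x| <= e) -> `|\int[mu]_x (h x * p x)| <= e.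
Proof.
move=> ch dp he; have [_ [p0 _]] := dp; have pi := density_integrable dp.
have hpi := continuous_mul_density_integrable ch dp.
apply: le_trans (le_normr_Rintegral measurableT hpi) _.
rewrite -[leRHS]mulr1 -(Rintegral_density dp) -RintegralZl //.
apply: le_Rintegral => //; [exact: integrable_norm | exact: integrableZl_EFin|].
by move=> x _; rewrite /= normrM (ger0_norm (p0 x)) ler_wpM2r.
Qed.

Lemma continuous_expR_comp {G : T -> R} : continuous G -> continuous (fun y => expR (G y)).
Proof. by move=> cG y; exact: continuous_comp (cG y) (@continuous_expR R (G y)). Qed.

Lemma Rintegral_expR_gt0 {G : T -> R} : (0 < mu setT)%E -> continuous G ->
  0 < \int[mu]_y expR (G y).
Proof.
move=> muT0 cG; have [M GM] := continuous_bounded cG.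
apply: (@lt_le_trans _ _ (\int[mu]_y expR (- M))).
  by rewrite Rintegral_cst // mulr_gt0 ?expR_gt0 // fine_gt0 // muT0 finite_muT.
apply: le_Rintegral => //.
- exact/continuous_integrable/cst_continuous.
- exact/continuous_integrable/continuous_expR_comp.
- by move=> y _; rewrite ler_expR lerNl (le_trans _ (GM y)) // -normrN ler_norm.
Qed.

Lemma ln_Rintegral_expR_convex {G1 G2 : T -> R} {l : R} : (0 < mu setT)%E ->
  continuous G1 -> continuous G2 -> 0 <= l <= 1 ->
  ln (\int[mu]_y expR (l * G1 y + (1 - l) * G2 y)) <=
  l * ln (\int[mu]_y expR (G1 y)) + (1 - l) * ln (\int[mu]_y expR (G2 y)).
Proof.
move=> muT0 c1 c2 l01.
have A0 := Rintegral_expR_gt0 muT0 c1; have B0 := Rintegral_expR_gt0 muT0 c2.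
set A := \int[mu]_y expR (G1 y) in A0 *; set B := \int[mu]_y expR (G2 y) in B0 *.
set c := l * ln A + (1 - l) * ln B.
have cG : continuous (fun y => l * G1 y + (1 - l) * G2 y).
  by move=> y; apply: cvgD; [exact: cvgMr (c1 y)|exact: cvgMr (c2 y)].
rewrite -[leRHS]expRK ler_ln ?posrE ?expR_gt0 ?Rintegral_expR_gt0 //.
have int_e1 := continuous_integrable (continuous_expR_comp c1).
have int_e2 := continuous_integrable (continuous_expR_comp c2).
have int1 := integrableZl_EFin (expR c * l / A) int_e1.
have int2 := integrableZl_EFin (expR c * (1 - l) / B) int_e2.
have -> : expR c =
    \int[mu]_y (expR c * l / A * expR (G1 y) + expR c * (1 - l) / B * expR (G2 y)).
  by rewrite RintegralD ?RintegralZl // -/A -/B; field; rewrite ?lt0r_neq0.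
apply: le_Rintegral => //.
- exact/continuous_integrable/continuous_expR_comp.
- exact: integrableD_EFin.
move=> y _.
rewrite [leRHS](_ : _ = expR c * (l * (expR (G1 y) / A) + (1 - l) * (expR (G2 y) / B))).
  exact: holder_expR_pointwise.
by ring.
Qed.

Lemma density_entropy_integrable {p : borel_type T -> R} : is_density mu p ->
  (entropy mu p < +oo)%E -> mu.-integrable setT (EFin \o (fun x => xlnx (p x))).
Proof.
move=> [mp [p0 _]] Sp; apply: (lower_bounded_integrable (-1)) => //.
- exact: measurableT_comp measurable_xlnx mp.
- by move=> x; exact: xlnx_ge_N1 (p0 x).
Qed.

Lemma entropy_Rintegral {p : borel_type T -> R} :
  mu.-integrable setT (EFin \o (fun x => xlnx (p x))) ->
  entropy mu p = (\int[mu]_x xlnx (p x))%:E.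
Proof. exact: integral_EFin_Rintegral. Qed.

Section mixture.
Context {l : R} {p1 p2 : borel_type T -> R}.
Hypotheses (l01 : 0 < l < 1) (dp1 : is_density mu p1) (dp2 : is_density mu p2).
Hypotheses (int_S1 : mu.-integrable setT (EFin \o (fun x => xlnx (p1 x))))
  (int_S2 : mu.-integrable setT (EFin \o (fun x => xlnx (p2 x)))).

Let p := fun x => l * p1 x + (1 - l) * p2 x.

Lemma mixture_entropy_integrable : mu.-integrable setT (EFin \o (fun x => xlnx (p x))).
Proof.
have /andP[l0 l1] := l01; have [mp1 [p10 _]] := dp1; have [mp2 [p20 _]] := dp2.
have p0 x : 0 <= p x by rewrite /p; have := p10 x; have := p20 x; nra.
have int_g : mu.-integrable setT (EFin \o (fun x =>
    l * `|xlnx (p1 x)| + (1 - l) * `|xlnx (p2 x)| + 1)).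
  apply/integrableD_EFin/(finite_integrable_cst 1 finite_muT).
  by apply: integrableD_EFin; apply: integrableZl_EFin; exact: integrable_norm.
apply: (le_integrable measurableT _ _ int_g).
  apply/measurable_EFinP/(measurableT_comp measurable_xlnx).
  by apply: measurable_funD; exact: measurable_funM.
move=> x _; rewrite /= !lee_fin.
have := xlnx_convex_le l01 (p10 x) (p20 x); have := xlnx_ge_N1 (p0 x).
have := ler_norm (xlnx (p1 x)); have := ler_norm (xlnx (p2 x)).
rewrite -/(p x); move: (xlnx (p x)) (xlnx (p1 x)) (xlnx (p2 x)) => s s1 s2.
move=> n2 n1 s_ge s_le; have := normr_ge0 s1; have := normr_ge0 s2.
move=> n20 n10; rewrite [leRHS]ger0_norm; last by nra.
rewrite ler_norml; apply/andP; split; nra.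
Qed.

Lemma Rintegral_xlnx_convex_lt : ~ {ae mu, forall x, p1 x = p2 x} ->
  \int[mu]_x xlnx (p x) < l * \int[mu]_x xlnx (p1 x) + (1 - l) * \int[mu]_x xlnx (p2 x).
Proof.
move=> not_ae_eq; have [_ [p10 _]] := dp1; have [_ [p20 _]] := dp2.
have int_S := mixture_entropy_integrable.
have int_comb :=
  integrableD_EFin (integrableZl_EFin l int_S1) (integrableZl_EFin (1 - l) int_S2).
set D := fun x => l * xlnx (p1 x) + (1 - l) * xlnx (p2 x) - xlnx (p x).
have : 0 < \int[mu]_x D x.
  apply: Rintegral_gt0; first exact: integrableB_EFin.
    by move=> x; rewrite subr_ge0; exact: xlnx_convex_le.
  move=> D_ae0; apply: not_ae_eq; apply: filterS D_ae0 => x Dx0.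
  apply/eqP/negPn/negP => p12.
  by have := xlnx_convex_lt l01 (p10 x) (p20 x) p12; move: Dx0; rewrite /D /p; lra.
rewrite /D RintegralB // RintegralD ?RintegralZl ?subr_gt0 //; exact: integrableZl_EFin.
Qed.

End mixture.

Variable K : T -> T -> R.
Hypothesis cK : continuous (fun xy : T * T => K xy.1 xy.2).

Definition potential (p : borel_type T -> R) (y : T) : R := \int[mu]_x (K x y * p x).

Lemma continuous_K_slice (y : T) : continuous (fun x => K x y).
Proof.
move=> x; have xy_cvg : (fun x => (x, y)) @ x --> (x, y).
  by apply: cvg_pair => //; exact: cvg_cst.
exact: continuous_comp xy_cvg (cK (x, y)).
Qed.

Lemma continuous_potential {p : borel_type T -> R} : is_density mu p ->
  continuous (potential p).
Proof.
move=> dp y0; apply/cvgrPdist_lt => e e0; have e2 : 0 < e / 2 by rewrite divr_gt0.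
apply: filterS (compact_equicontinuous compactT cK y0 _ e2) => y Ky.
have int_y := continuous_mul_density_integrable (continuous_K_slice y) dp.
have int_y0 := continuous_mul_density_integrable (continuous_K_slice y0) dp.
rewrite /potential -RintegralB //; under eq_Rintegral do rewrite -mulrBl.
apply: (@le_lt_trans _ _ (e / 2)); last lra.
apply: Rintegral_mul_density_le dp _ => [x|x]; first by apply: cvgB; exact: continuous_K_slice.
by rewrite distrC ltW.
Qed.

Lemma potential_mixture {p1 p2 : borel_type T -> R} (l : R) (y : T) :
  is_density mu p1 -> is_density mu p2 ->
  potential (fun x => l * p1 x + (1 - l) * p2 x) y =
  l * potential p1 y + (1 - l) * potential p2 y.
Proof.
move=> dp1 dp2; have int1 := continuous_mul_density_integrable (continuous_K_slice y) dp1.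
have int2 := continuous_mul_density_integrable (continuous_K_slice y) dp2.
rewrite /potential -!RintegralZl // -RintegralD //; try exact: integrableZl_EFin.
by apply: eq_Rintegral => x _; ring.
Qed.

Lemma ln_partition_fun_convex {p1 p2 : borel_type T -> R} (beta l : R) :
  is_density mu p1 -> is_density mu p2 -> 0 <= l <= 1 ->
  ln (partition_fun mu K beta (fun x => l * p1 x + (1 - l) * p2 x)) <=
  l * ln (partition_fun mu K beta p1) + (1 - l) * ln (partition_fun mu K beta p2).
Proof.
move=> dp1 dp2 l01.
have c_beta_pot p : is_density mu p -> continuous (fun y => beta * potential p y).
  by move=> dp y; apply: cvgMr; exact: continuous_potential.
have -> : partition_fun mu K beta (fun x => l * p1 x + (1 - l) * p2 x) =
    \int[mu]_y expR (l * (beta * potential p1 y) + (1 - l) * (beta * potential p2 y)).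
  apply: eq_Rintegral => y _; have := potential_mixture l y dp1 dp2.
  by rewrite /potential => ->; congr expR; ring.
exact: ln_Rintegral_expR_convex (density_measureT_gt0 dp1)
  (c_beta_pot _ dp1) (c_beta_pot _ dp2) l01.
Qed.

End free_energy_convexity.

Theorem proposition1 (R : realType) (T : pseudoPMetricType R)
  (mu : {measure set (borel_type T) -> \bar R})
  (K : T -> T -> R) (beta : R) (p1 p2 : borel_type T -> R) (lambda : R) :
  compact [set: T] -> hausdorff_space T ->
  (mu setT < +oo)%E ->
  continuous (fun xy : T * T => K xy.1 xy.2) ->
  0 < beta ->
  is_density mu p1 -> is_density mu p2 ->
  ~ {ae mu, forall x, p1 x = p2 x} ->
  (entropy mu p1 < +oo)%E -> (entropy mu p2 < +oo)%E ->
  0 < lambda < 1 ->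
  (free_energy mu K beta (fun x => (lambda * p1 x + (1 - lambda) * p2 x)%R)
   < lambda%:E * free_energy mu K beta p1
     + (1 - lambda)%:E * free_energy mu K beta p2)%E.
Proof.
move=> compactT _ finite_muT cK beta0 dp1 dp2 not_ae_eq S1 S2 l01.
have int_S1 := density_entropy_integrable mu finite_muT dp1 S1.
have int_S2 := density_entropy_integrable mu finite_muT dp2 S2.
have int_S := mixture_entropy_integrable mu finite_muT l01 dp1 dp2 int_S1 int_S2.
rewrite /free_energy !entropy_Rintegral // -!EFinM -!EFinD lte_fin.
have l01w : 0 <= lambda <= 1 by case/andP: l01 => l0 l1; rewrite !ltW.
have le_Z := ln_partition_fun_convex mu compactT finite_muT K cK beta lambda dp1 dp2 l01w.
have lt_S := Rintegral_xlnx_convex_lt mu finite_muT l01 dp1 dp2 int_S1 int_S2 not_ae_eq.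
by apply: scaled_convex_comb_lt le_Z lt_S; rewrite invr_gt0.
Qed.
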